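(* Let $a(s)=s^n+a_1s^{n-1}+\cdots+a_n$ and $b(s)=s^n+b_1s^{n-1}+\cdots+b_n$ be real Hurwitz stable polynomials of degree $n$, and let $c(s)=s^{n-1}+x_1s^{n-2}+\cdots+x_{n-1}$ be a real polynomial such that $\mathrm{Re}\left[\frac{c(j\omega)}{a(j\omega)}\right]>0$ and $\mathrm{Re}\left[\frac{c(j\omega)}{b(j\omega)}\right]>0$ for all $\omega\in\mathbb{R}$. Let $h(s)$ be any monic real polynomial of degree $n$ and set $\tilde c(s):=c(s)+\delta h(s)$. Then there exists $\delta_0>0$ such that for every $\delta\in(0,\delta_0)$ both $\tilde c(s)/a(s)$ and $\tilde c(s)/b(s)$ are strictly positive real.
   Context: A real polynomial is Hurwitz stable if all its roots lie in the open left half-plane. A rational function $f(s)=p(s)/q(s)$ with $p,q$ real polynomials is strictly positive real if (i) $\deg p=\deg q$; (ii) $q$ is Hurwitz stable; (iii) $\mathrm{Re}[f(j\omega)]>0$ for all $\omega\in\mathbb{R}$. *)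

From HB Require Import structures.
From mathcomp Require Import all_boot all_order all_algebra.
From mathcomp Require Import reals.
From mathcomp.real_closed Require Import complex.
Set Implicit Arguments. Unset Strict Implicit. Unset Printing Implicit Defensive.
Import Order.TTheory GRing.Theory Num.Theory.
Local Open Scope ring_scope.

Definition polyC_of (R : rcfType) (p : {poly R}) : {poly R[i]} :=
  map_poly (real_complex R) p.

Definition eval_jw (R : rcfType) (p : {poly R}) (w : R) : R[i] :=
  (polyC_of p).[Complex 0 w].

Definition hurwitz (R : rcfType) (p : {poly R}) : Prop :=
  forall z : R[i], root (polyC_of p) z -> complex.Re z < 0.

Definition SPR (R : rcfType) (p q : {poly R}) : Prop :=
  [/\ (size p = size q)%N, hurwitz q &
      forall w : R, 0 < complex.Re (eval_jw p w / eval_jw q w)].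

(* Multiplying by the conjugate of the denominator, Re[c(jw)/a(jw)] > 0 says
   that the real even polynomial P(w) = Re[c(jw) a(jw)^*] is positive, and the
   perturbation adds d Q(w) with Q(w) = Re[h(jw) a(jw)^*], an even polynomial
   of degree 2n with leading coefficient 1.  Hence Q >= 1 for |w| >= some W, while
   on [-W, W] the minimum of P is positive and Q is bounded below, so
   P + d Q > 0 for all small d > 0.  Since deg c < deg h, adding d h keeps
   the degree equal to that of the denominator. *)

From HB Require Import structures.
From mathcomp Require Import all_boot all_order all_algebra.
From mathcomp Require Import reals.
From mathcomp.real_closed Require Import complex polyrcf.
From mathcomp Require Import ring lra.
From mathcomp Require Import classical_sets topology normedtype derive.
Set Implicit Arguments.
Unset Strict Implicit.
Unset Printing Implicit Defensive.

Import numFieldNormedType.Exports numFieldTopology.Exports.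
Import Order.TTheory GRing.Theory Num.Theory.
Local Open Scope ring_scope.
Local Open Scope complex_scope.

Section ImaginaryAxis.
Variable R : rcfType.
Implicit Types (p q r : {poly R}) (w d : R).

Definition jw_poly p : {poly R[i]} := polyC_of p \Po ('i%C *: 'X).

(* For real [w], [(jw_poly q \Po - 'X).[w%:C]] is the conjugate of [q(jw)]. *)
Definition cross_jw p q : {poly R} :=
  map_poly (@complex.Re R) (jw_poly p * (jw_poly q \Po - 'X)).

Lemma horner_map_Re (F : {poly R[i]}) w :
  (map_poly (@complex.Re R) F).[w] = complex.Re F.[w%:C].
Proof.
have ReD (x y : R[i]) : complex.Re (x + y) = complex.Re x + complex.Re y.
  by case: x; case: y.
have size_Re : (size (map_poly (@complex.Re R) F) <= size F)%N.
  by rewrite size_poly.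
rewrite (horner_coef_wide _ size_Re) [F.[_]]horner_coef.
rewrite (big_morph _ ReD (erefl (complex.Re 0))); apply: eq_bigr => i _.
by rewrite coef_map_id0 // -rmorphXn; case: F`_i => x y /=; ring.
Qed.

Lemma horner_jw_poly p w : (jw_poly p).[w%:C] = eval_jw p w.
Proof.
rewrite /jw_poly horner_comp hornerZ hornerX /eval_jw; congr (_.[_]).
by rewrite mulrC; simpc.
Qed.

Lemma eval_jwN p w : eval_jw p (- w) = (eval_jw p w)^*.
Proof.
rewrite /eval_jw -horner_map /polyC_of -map_poly_comp.
by rewrite (eq_map_poly (conjc_real (R:=R))).
Qed.

Lemma horner_cross_jw p q w :
  (cross_jw p q).[w] = complex.Re (eval_jw p w * (eval_jw q w)^*).
Proof.
rewrite horner_map_Re hornerM [(jw_poly q \Po _).[_]]horner_comp.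
by rewrite hornerN hornerX -rmorphN !horner_jw_poly eval_jwN.
Qed.

Lemma horner_cross_jwN p q w : (cross_jw p q).[- w] = (cross_jw p q).[w].
Proof. by rewrite !horner_cross_jw !eval_jwN -rmorphM; case: (_ * _). Qed.

Lemma horner_cross_jwDZl p r q d w :
  (cross_jw (p + d *: r) q).[w] = (cross_jw p q).[w] + d * (cross_jw r q).[w].
Proof.
rewrite !horner_cross_jw /eval_jw /polyC_of -mul_polyC rmorphD rmorphM /=.
rewrite map_polyC hornerD hornerM hornerC.
by case: (_.[_]) => ? ?; case: (_.[_]) => ? ?; case: (_.[_]) => ? ? /=; ring.
Qed.

Lemma lead_coef_cross_jw p q : size p = size q ->
  lead_coef (cross_jw p q) = lead_coef p * lead_coef q.
Proof.
move=> spq.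
have size_iX : size ('i%C *: 'X : {poly R[i]}) = 2%N.
  by rewrite size_scale ?size_polyX // eq_complex /= oner_eq0 andbF.
have size_jw r : size (jw_poly r) = size r.
  by rewrite size_comp_poly2 ?size_iX // size_map_poly.
have lead_jw r : lead_coef (jw_poly r) = (lead_coef r)%:C * 'i%C ^+ (size r).-1.
  rewrite /jw_poly lead_coef_comp ?size_iX // /polyC_of lead_coef_map.
  by rewrite size_map_poly lead_coefZ lead_coefX mulr1.
have size_NX : size (- 'X : {poly R[i]}) = 2%N by rewrite size_polyN size_polyX.
have lead_prod : lead_coef (jw_poly p * (jw_poly q \Po - 'X))
    = (lead_coef p * lead_coef q)%:C.
  rewrite lead_coefM [lead_coef (_ \Po - 'X)]lead_coef_comp ?size_NX //.
  rewrite !lead_jw size_jw lead_coefN lead_coefX spq.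
  have i_i_N1 : 'i%C * 'i%C * -1 = 1 :> R[i].
    by rewrite -expr2 sqr_i mulrN1 opprK.
  rewrite rmorphM -mulrA; congr (_ * _).
  by rewrite mulrCA -mulrA [X in _ * X]mulrA -!exprMn i_i_N1 expr1n mulr1.
rewrite /cross_jw; have [lpq0|lpq_neq0] := eqVneq (lead_coef p * lead_coef q) 0.
  move: lead_prod; rewrite lpq0 rmorph0 => /eqP.
  rewrite lead_coef_eq0 => /eqP->.
  by rewrite map_poly0 lead_coef0.
by rewrite lead_coef_map_id0 ?lead_prod.
Qed.

Lemma Re_div_gt0 (x u : R[i]) : u != 0 ->
  (0 < complex.Re (x / u)) = (0 < complex.Re (x * u^*)).
Proof.
case: u => u1 u2 u_neq0.
have n2_gt0 : 0 < u1 ^+ 2 + u2 ^+ 2.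
  rewrite lt_def paddr_eq0 ?sqr_ge0 // !sqrf_eq0 addr_ge0 ?sqr_ge0 // andbT.
  by apply: contra u_neq0 => /andP[/eqP-> /eqP->].
have -> : complex.Re (x / (u1 +i* u2))
    = complex.Re (x * (u1 +i* u2)^*) / (u1 ^+ 2 + u2 ^+ 2).
  by case: x => x1 x2 /=; ring.
by rewrite pmulr_lgt0 ?invr_gt0.
Qed.

End ImaginaryAxis.

Section PolyPerturbation.
Variable R : realType.
Implicit Types P Q : {poly R}.

Lemma poly_perturb_gt0_on_ge0 P Q :
  (forall w, 0 <= w -> 0 < P.[w]) -> 0 < lead_coef Q ->
  exists2 d0 : R, 0 < d0 &
    forall d w, 0 < d -> d < d0 -> 0 <= w -> 0 < P.[w] + d * Q.[w].
Proof.
move=> P_gt0 lQ_gt0; have [W0 Q_ge_lc] := poly_pinfty_gt_lc lQ_gt0.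
pose W : R := `|W0|; have W_ge0 : 0 <= W := normr_ge0 W0.
have horner_cont F : {within `[0, W], continuous (horner F : R -> R)}%classic.
  by apply: continuous_subspaceT; exact: continuous_horner.
have [wP wP_in P_min] := EVT_min W_ge0 (horner_cont P).
have [wQ _ Q_min] := EVT_min W_ge0 (horner_cont Q).
have m_gt0 : 0 < P.[wP] by apply: P_gt0; move: wP_in; rewrite in_itv => /andP[].
exists (P.[wP] / (`|Q.[wQ]| + 1)) => [|d w d_gt0 d_lt w_ge0].
  by rewrite divr_gt0 // ltr_wpDl.
have [W_le_w|w_lt_W] := leP W w.
  have lc_le : lead_coef Q <= Q.[w] by apply/Q_ge_lc/(le_trans (ler_norm W0)).
  by rewrite addr_gt0 ?P_gt0 ?mulr_gt0 ?(lt_le_trans lQ_gt0 lc_le).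
have w_in : w \in `[0, W] by rewrite in_itv /= w_ge0 ltW.
have := P_min w w_in; have := Q_min w w_in.
have : d * (`|Q.[wQ]| + 1) < P.[wP] by rewrite -ltr_pdivlMr // ltr_wpDl.
have := lerNnormlW (lexx `|Q.[wQ]|).
nra.
Qed.

Lemma even_poly_perturb_gt0 P Q :
  (forall w, P.[- w] = P.[w]) -> (forall w, Q.[- w] = Q.[w]) ->
  (forall w, 0 < P.[w]) -> 0 < lead_coef Q ->
  exists2 d0 : R, 0 < d0 & forall d w, 0 < d -> d < d0 -> 0 < P.[w] + d * Q.[w].
Proof.
move=> P_even Q_even P_gt0 lQ_gt0.
have [d0 d0_gt0 perturb] := poly_perturb_gt0_on_ge0 (fun w _ => P_gt0 w) lQ_gt0.
exists d0 => // d w d_gt0 d_lt.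
have [w_ge0|w_lt0] := leP 0 w; first exact: perturb.
by rewrite -P_even -Q_even perturb // oppr_ge0 ltW.
Qed.

End PolyPerturbation.

Lemma Re_div_jw_perturb_gt0 (R : realType) (a c h : {poly R}) :
  size h = size a -> 0 < lead_coef h * lead_coef a ->
  (forall w, 0 < complex.Re (eval_jw c w / eval_jw a w)) ->
  exists2 d0 : R, 0 < d0 & forall d w, 0 < d -> d < d0 ->
    0 < complex.Re (eval_jw (c + d *: h) w / eval_jw a w).
Proof.
move=> sha lha_gt0 Re_ca_gt0.
have a_neq0 w : eval_jw a w != 0.
  by apply: contraTneq (Re_ca_gt0 w) => ->; rewrite invr0 mulr0 ltxx.
have cross_ca_gt0 w : 0 < (cross_jw c a).[w].
  by rewrite horner_cross_jw -Re_div_gt0.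
have lead_cross_ha_gt0 : 0 < lead_coef (cross_jw h a).
  by rewrite lead_coef_cross_jw.
have [d0 d0_gt0 perturb] := even_poly_perturb_gt0 (horner_cross_jwN c a)
  (horner_cross_jwN h a) cross_ca_gt0 lead_cross_ha_gt0.
exists d0 => // d w d_gt0 d_lt.
by rewrite Re_div_gt0 // -horner_cross_jw horner_cross_jwDZl perturb.
Qed.

Lemma SPR_perturb (R : realType) (a c h : {poly R}) :
  (size c < size a)%N -> size h = size a -> 0 < lead_coef h * lead_coef a ->
  hurwitz a -> (forall w, 0 < complex.Re (eval_jw c w / eval_jw a w)) ->
  exists2 d0 : R, 0 < d0 &
    forall d, 0 < d -> d < d0 -> SPR (c + d *: h) a.
Proof.
move=> sca sha lha_gt0 hurwitz_a Re_ca_gt0.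
have [d0 d0_gt0 perturb] := Re_div_jw_perturb_gt0 sha lha_gt0 Re_ca_gt0.
exists d0 => // d d_gt0 d_lt; split=> [||w]; last exact: perturb.
- by rewrite addrC size_polyDl size_scale ?gt_eqF // sha.
- exact: hurwitz_a.
Qed.

Theorem lemma4 (R : realType) (n : nat) (a b c h : {poly R}) :
  (0 < n)%N ->
  a \is monic -> size a = n.+1 -> hurwitz a ->
  b \is monic -> size b = n.+1 -> hurwitz b ->
  c \is monic -> size c = n ->
  (forall w : R, 0 < complex.Re (eval_jw c w / eval_jw a w)) ->
  (forall w : R, 0 < complex.Re (eval_jw c w / eval_jw b w)) ->
  h \is monic -> size h = n.+1 ->
  exists delta0 : R, 0 < delta0 /\
    forall delta : R, 0 < delta -> delta < delta0 ->
      SPR (c + delta *: h) a /\ SPR (c + delta *: h) b.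
Proof.
move=> _ /monicP la sa hurwitz_a /monicP lb sb hurwitz_b _ sc Re_ca Re_cb
  /monicP lh sh.
have size_c_lt (p : {poly R}) : size p = n.+1 -> (size c < size p)%N.
  by move->; rewrite sc.
have size_h (p : {poly R}) : size p = n.+1 -> size h = size p by move->.
have lead_hp_gt0 (p : {poly R}) :
    lead_coef p = 1 -> 0 < lead_coef h * lead_coef p.
  by move->; rewrite lh mulr1 ltr01.
have [da da_gt0 SPR_a] := SPR_perturb (size_c_lt a sa) (size_h a sa)
  (lead_hp_gt0 a la) hurwitz_a Re_ca.
have [db db_gt0 SPR_b] := SPR_perturb (size_c_lt b sb) (size_h b sb)
  (lead_hp_gt0 b lb) hurwitz_b Re_cb.
exists (Num.min da db); split=> [|d d_gt0]; first by rewrite lt_min da_gt0.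
by rewrite lt_min => /andP[d_lt_a d_lt_b]; split; [apply: SPR_a | apply: SPR_b].
Qed.
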